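(* For all $n\in\mathbb N$ the following hold in $\mathbb V$: $$\sum_{k=0}^n G_{n-k}\star W_{-k}\,q^{2k-n}=\sum_{k=0}^n W_{-k}\star G_{n-k}\,q^{n-2k}=[2]_q^n(xy+yx)^nx,$$ $$\sum_{k=0}^n G_{n-k}\star W_{k+1}\,q^{n-2k}=\sum_{k=0}^n W_{k+1}\star G_{n-k}\,q^{2k-n}=[2]_q^n\,y(xy+yx)^n,$$ $$\sum_{k=0}^n \tilde G_{n-k}\star W_{-k}\,q^{n-2k}=\sum_{k=0}^n W_{-k}\star\tilde G_{n-k}\,q^{2k-n}=[2]_q^n\,x(xy+yx)^n,$$ $$\sum_{k=0}^n \tilde G_{n-k}\star W_{k+1}\,q^{2k-n}=\sum_{k=0}^n W_{k+1}\star\tilde G_{n-k}\,q^{n-2k}=[2]_q^n(xy+yx)^ny.$$ On the right-hand sides, powers and products are taken in the free (concatenation) product.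
   Context: Let $\mathbb F$ be a field and let $q\in\mathbb F$ be nonzero and not a root of unity. Let $[m]_q=(q^m-q^{-m})/(q-q^{-1})$. Let $\mathbb V$ be the free associative $\mathbb F$-algebra on noncommuting $x,y$, with basis the words (including $1$). Juxtaposition denotes concatenation. Set $\langle x,x\rangle=\langle y,y\rangle=2$ and $\langle x,y\rangle=\langle y,x\rangle=-2$. The $q$-shuffle product $\star$ is the bilinear product determined as follows: - $1\star v=v\star 1=v$; - for nontrivial words $u=u_1\cdots u_r$ and $v=v_1\cdots v_s$, $$u\star v=u_1((u_2\cdots u_r)\star v)+v_1(u\star(v_2\cdots v_s))q^{\langle u_1,v_1\rangle+\cdots+\langle u_r,v_1\rangle}.$$ This makes $\mathbb V$ an associative algebra, the $q$-shuffle algebra. For $k\in\mathbb N$: - $W_{-k}=xyx\cdots x$ is the alternating word of length $2k+1$ beginning and ending with $x$; - $W_{k+1}=yxy\cdots y$ is the alternating word of length $2k+1$ beginning and ending with $y$; - $G_k=yxyx\cdots yx$ is the word of length $2k$; - $\tilde G_k=xyxy\cdots xy$ is the word of length $2k$; - $G_0=\tilde G_0=1$. *)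

From mathcomp Require Import all_boot all_algebra.
Set Implicit Arguments. Unset Strict Implicit. Unset Printing Implicit Defensive.
Import GRing.Theory.
Local Open Scope ring_scope.

(* A word is a seq bool (false = x, true = y).
   An element of V is represented by a finite formal linear combination
   (a list of (coefficient, word) pairs); two representatives denote the
   same element of V iff they have the same coefficient at every word
   (relation veq). *)

Definition word := seq bool.
Definition lx : bool := false.
Definition ly : bool := true.

Section QShuffle.
Variables (F : fieldType) (q : F).

Definition V := seq (F * word).

Definition coef (v : V) (w : word) : F :=
  \sum_(p <- v) (if p.2 == w then p.1 else 0).

Definition veq (a b : V) : Prop := forall w, coef a w = coef b w.

Definition vscale (c : F) (v : V) : V := [seq (c * p.1, p.2) | p <- v].
Definition vadd (a b : V) : V := a ++ b.
Definition vword (w : word) : V := [:: (1, w)].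

Definition vcat (a b : V) : V :=
  flatten [seq [seq (p.1 * r.1, p.2 ++ r.2) | r <- b] | p <- a].
Definition vpow (a : V) (n : nat) : V := iter n (vcat a) (vword [::]).

Definition bform (a b : bool) : int := if a == b then 2%:Z else - 2%:Z.

Fixpoint wshuffle (u : word) : word -> V :=
  match u with
  | [::] => fun v => vword v
  | a :: u' =>
      fix wsh_u (v : word) : V :=
        match v with
        | [::] => vword (a :: u')
        | b :: v' =>
            [seq (p.1, a :: p.2) | p <- wshuffle u' v] ++
            vscale (q ^ (\sum_(c <- a :: u') bform c b))
                   [seq (p.1, b :: p.2) | p <- wsh_u v']
        end
  end.

Definition star (a b : V) : V :=
  flatten [seq flatten [seq vscale (p.1 * r.1) (wshuffle p.2 r.2) | r <- b]
          | p <- a].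

Definition vsum (n : nat) (f : nat -> V) : V :=
  flatten [seq f k | k <- iota 0 n.+1].

Definition qint (m : int) : F := (q ^ m - q ^ (- m)) / (q - q^-1).

End QShuffle.

Definition Wneg (k : nat) : word := lx :: flatten (nseq k [:: ly; lx]).
(* W_{k+1} = y x y ... y (length 2k+1) *)
Definition Wpos (k : nat) : word := ly :: flatten (nseq k [:: lx; ly]).
Definition Gw (k : nat) : word := flatten (nseq k [:: ly; lx]).
Definition Gtw (k : nat) : word := flatten (nseq k [:: lx; ly]).

Definition xyyx (F : fieldType) : V F := [:: (1, [:: lx; ly]); (1, [:: ly; lx])].

(* Compare coefficients at a word w.  Peeling the first letter c off w turns the
   defining recursion of the q-shuffle into
     coef(u ⋆ v, c w) = [u_1 = c] coef(u' ⋆ v, w) + [v_1 = c] q^<u, v_1> coef(u ⋆ v', w).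
   For alternating words <u, c> is 0 when u has even length and +-2 when it has odd
   length, so peeling two letters expresses each weighted sum
   sum_{i+j=n} q^{+-(j-i)} coef(E_i ⋆ O_j, c d w), with E_i and O_j alternating words
   of lengths 2i and 2j+1, through the sums of level n - 1 at w.  The sums for E ⋆ O
   and for O ⋆ E obey the same recursion, namely the one of coef((xy+yx)^n x, w)
   (or of coef(x (xy+yx)^n, w) when E and O start with different letters) multiplied
   by q + q^-1 = [2]_q, and induction on n gives all the identities. *)

From mathcomp Require Import all_boot all_algebra.
From mathcomp Require Import ring zify.
Set Implicit Arguments. Unset Strict Implicit. Unset Printing Implicit Defensive.
Import GRing.Theory.
Local Open Scope ring_scope.

Section Coefficients.
Variable F : fieldType.
Implicit Types (s t Z : V F) (w : word).

Lemma coef_cat s t w : coef (s ++ t) w = coef s w + coef t w.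
Proof. by rewrite /coef big_cat. Qed.

Lemma coef_vscale k s w : coef (vscale k s) w = k * coef s w.
Proof.
rewrite /coef big_map mulr_sumr; apply: eq_bigr => p _.
by case: ifP; rewrite ?mulr0.
Qed.

Lemma coef_vword u w : coef (vword F u) w = (u == w)%:R.
Proof. by rewrite /coef big_seq1; case: eqP. Qed.

Lemma coef_vsum n (f : nat -> V F) w :
  coef (vsum n f) w = \sum_(0 <= k < n.+1) coef (f k) w.
Proof. by rewrite /coef /vsum big_flatten big_map /index_iota subn0. Qed.

Lemma coef_map_cons (f : F * word -> F) (g : F * word -> word) x s c w :
  coef [seq (f r, x :: g r) | r <- s] (c :: w) =
  (x == c)%:R * coef [seq (f r, g r) | r <- s] w.
Proof.
rewrite /coef !big_map mulr_sumr; apply: eq_bigr => p _ /=.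
by rewrite eqseq_cons; case: (x == c); rewrite ?mul1r ?mul0r //=; case: ifP.
Qed.

Lemma coef_map_cons_nil (f : F * word -> F) (g : F * word -> word) x s :
  coef [seq (f r, x :: g r) | r <- s] [::] = 0.
Proof. by rewrite /coef big_map big1. Qed.

Lemma coef_map_id s w : coef [seq (r.1, r.2) | r <- s] w = coef s w.
Proof. by rewrite /coef big_map; apply: eq_bigr => -[]. Qed.

Lemma vcat_cat s t Z : vcat (s ++ t) Z = vcat s Z ++ vcat t Z.
Proof. by rewrite /vcat map_cat flatten_cat. Qed.

Lemma vcatA s t Z : vcat (vcat s t) Z = vcat s (vcat t Z).
Proof.
elim: s => [|p s IH] //=; rewrite vcat_cat IH; congr (_ ++ _).
rewrite /vcat map_flatten -!map_comp; congr flatten; apply: eq_map => r /=.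
by rewrite -map_comp; apply: eq_map => r' /=; rewrite mulrA catA.
Qed.

Lemma coef_letter_vcat a Z c w :
  coef (vcat (vword F [:: a]) Z) (c :: w) = (a == c)%:R * coef Z w.
Proof. by rewrite /vcat /= cats0 coef_map_cons -/(vscale 1 _) coef_vscale mul1r. Qed.

Lemma coef_letter_vcat_nil a Z : coef (vcat (vword F [:: a]) Z) [::] = 0.
Proof. by rewrite /vcat /= cats0 coef_map_cons_nil. Qed.

Lemma coef_xyyx_vcat Z c d w :
  coef (vcat (xyyx F) Z) (c :: d :: w) = (c != d)%:R * coef Z w.
Proof.
rewrite /vcat /= cats0 coef_cat !coef_map_cons -!/(vscale 1 _) !coef_vscale.
rewrite !mul1r !mulrA -mulrDl.
by congr (_ * _); case: c; case: d; rewrite /= ?mulr1 ?mulr0 ?addr0 ?add0r.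
Qed.

Lemma coef_xyyx_vcat_short Z w : (size w < 2)%N -> coef (vcat (xyyx F) Z) w = 0.
Proof.
rewrite /vcat /= cats0 coef_cat; case: w => [|c [|d w]] // _.
  by rewrite !coef_map_cons_nil addr0.
by rewrite !coef_map_cons !coef_map_cons_nil !mulr0 addr0.
Qed.

End Coefficients.

Section ShuffleCoefficients.
Variables (F : fieldType) (q : F).
Implicit Types (u v w : word) (c : bool).

Definition shcoef u v w : F := coef (wshuffle q u v) w.
Definition bform_sum u c : int := \sum_(d <- u) bform d c.

Lemma coef_star u v w : coef (star q (vword F u) (vword F v)) w = shcoef u v w.
Proof. by rewrite /star /= !cats0 coef_vscale !mul1r. Qed.

Lemma shcoef_nil_l v w : shcoef [::] v w = (v == w)%:R.
Proof. exact: coef_vword. Qed.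

Lemma shcoef_nil_r u w : shcoef u [::] w = (u == w)%:R.
Proof. by case: u => [|x u]; apply: coef_vword. Qed.

Lemma shcoef_cons u v c w :
  shcoef u v (c :: w) =
    (if u is x :: u' then (x == c)%:R * shcoef u' v w else 0)
  + (if v is y :: v' then (y == c)%:R * q ^ bform_sum u y * shcoef u v' w else 0).
Proof.
case: u => [|x u]; case: v => [|y v].
- by rewrite shcoef_nil_l addr0.
- rewrite !shcoef_nil_l /bform_sum big_nil expr0z mulr1 eqseq_cons add0r.
  by case: (y == c); rewrite ?mul1r ?mul0r.
- rewrite !shcoef_nil_r eqseq_cons addr0.
  by case: (x == c); rewrite ?mul1r ?mul0r.
- rewrite /shcoef /= coef_cat coef_vscale !coef_map_cons.
  by rewrite !coef_map_id mulrCA mulrA.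
Qed.

Lemma shcoef_nil u v : shcoef u v [::] = ((u == [::]) && (v == [::]))%:R.
Proof.
case: u => [|x u]; case: v => [|y v]; rewrite ?shcoef_nil_l ?shcoef_nil_r //.
by rewrite /shcoef /= coef_cat coef_vscale !coef_map_cons_nil mulr0 addr0.
Qed.

Lemma shcoef_size u v w : size w != (size u + size v)%N -> shcoef u v w = 0.
Proof.
elim: w u v => [|c w IH] u v size_w.
  by move: size_w; rewrite shcoef_nil; case: u; case: v.
rewrite shcoef_cons; case: u size_w => [|x u]; case: v => [|y v] /= size_w;
  rewrite ?IH ?mulr0 ?addr0 //=; lia.
Qed.

End ShuffleCoefficients.

(* Gw k, Gtw k, Wneg k and Wpos k are convertible to evenw lx k, evenw ly k, oddw lx k
   and oddw ly k. *)
Definition evenw (a : bool) (k : nat) : word := flatten (nseq k [:: ~~ a; a]).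
Definition oddw (a : bool) (k : nat) : word := a :: evenw a k.
Arguments evenw : simpl never.

Lemma evenw0 a : evenw a 0 = [::]. Proof. by []. Qed.
Lemma evenwS a k : evenw a k.+1 = ~~ a :: oddw a k. Proof. by []. Qed.

Lemma size_evenw a k : size (evenw a k) = (2 * k)%N.
Proof. by elim: k => [|k IH] //; rewrite evenwS /= IH; lia. Qed.

Lemma size_oddw a k : size (oddw a k) = (2 * k).+1.
Proof. by rewrite /= size_evenw. Qed.

Lemma bformxx a : bform a a = 2%:Z. Proof. by rewrite /bform eqxx. Qed.
Lemma bformN a : bform a (~~ a) = - 2%:Z. Proof. by case: a. Qed.
Lemma bformNl a : bform (~~ a) a = - 2%:Z. Proof. by case: a. Qed.

Lemma bform_sum_nil c : bform_sum [::] c = 0.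
Proof. by rewrite /bform_sum big_nil. Qed.

Lemma bform_sum_evenw a k c : bform_sum (evenw a k) c = 0.
Proof.
elim: k => [|k IH]; first exact: bform_sum_nil.
by rewrite /bform_sum evenwS !big_cons -/(bform_sum _ c) IH addr0; case: (a); case: (c).
Qed.

(* The shape in which bform_sum (evenw a k.+1) c appears once evenwS has been used. *)
Lemma bform_sum_evenwS a k c : bform_sum (~~ a :: oddw a k) c = 0.
Proof. exact: (bform_sum_evenw a k.+1). Qed.

Lemma bform_sum_oddw a k c : bform_sum (oddw a k) c = bform a c.
Proof. by rewrite /bform_sum big_cons -/(bform_sum _ c) bform_sum_evenw addr0. Qed.

Section AlternatingShuffles.
Variables (F : fieldType) (q : F).
Hypothesis q_neq0 : q != 0.
Local Notation shc := (shcoef q).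

Local Ltac peel2 := do 2 (rewrite ?evenwS ?evenw0 ?shcoef_cons /=);
  rewrite ?bform_sum_nil ?bform_sum_evenw ?bform_sum_evenwS ?bform_sum_oddw
          ?negbK ?bformxx ?bformN ?bformNl ?expr0z -?exprnN -?exprnP.

Lemma shcoef_evenw_oddw a i j c d w :
  shc (evenw a i) (oddw a j) (c :: d :: w) =
    (if i is i'.+1 then
       (~~ a == c)%:R * (a == d)%:R *
         (shc (evenw a i') (oddw a j) w + q ^+ 2 * shc (oddw a i') (evenw a j) w)
     + (a == c)%:R * (~~ a == d)%:R * shc (oddw a i') (evenw a j) w else 0)
  + (if j is j'.+1 then
       (a == c)%:R * (~~ a == d)%:R * shc (evenw a i) (oddw a j') w else 0).
Proof. by case: i j => [|i] [|j]; peel2; field. Qed.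

Lemma shcoef_oddw_evenw a i j c d w :
  shc (oddw a j) (evenw a i) (c :: d :: w) =
    (if i is i'.+1 then
       (a == c)%:R * (~~ a == d)%:R * shc (evenw a j) (oddw a i') w
     + (~~ a == c)%:R * (a == d)%:R * q ^- 2 *
         (shc (evenw a j) (oddw a i') w + q ^+ 2 * shc (oddw a j) (evenw a i') w)
     else 0)
  + (if j is j'.+1 then
       (a == c)%:R * (~~ a == d)%:R * shc (oddw a j') (evenw a i) w else 0).
Proof. by case: i j => [|i] [|j]; peel2; field. Qed.

Lemma shcoef_evenwN_oddw a i j c d w :
  shc (evenw (~~ a) i) (oddw a j) (c :: d :: w) =
    (if i is i'.+1 then
       (a == c)%:R * ((~~ a == d)%:R * shc (evenw (~~ a) i') (oddw a j) w
                      + (a == d)%:R * (q ^- 2 + 1) * shc (oddw (~~ a) i') (evenw a j) w)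
     else 0)
  + (if j is j'.+1 then
       (a == c)%:R * (~~ a == d)%:R * shc (evenw (~~ a) i) (oddw a j') w else 0).
Proof. by case: i j => [|i] [|j]; peel2; field. Qed.

Lemma shcoef_oddw_evenwN a i j c d w :
  shc (oddw a j) (evenw (~~ a) i) (c :: d :: w) =
    (if i is i'.+1 then
       (a == c)%:R * ((a == d)%:R * (1 + q ^+ 2) * shc (evenw a j) (oddw (~~ a) i') w
                      + (~~ a == d)%:R * shc (oddw a j) (evenw (~~ a) i') w)
     else 0)
  + (if j is j'.+1 then
       (a == c)%:R * (~~ a == d)%:R * shc (oddw a j') (evenw (~~ a) i) w else 0).
Proof. by case: i j => [|i] [|j]; peel2; field. Qed.

End AlternatingShuffles.

Section Convolution.
Variable R : comPzRingType.
Implicit Types (f g : nat -> nat -> R) (al be : R).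

Definition convsum n f : R := \sum_(0 <= k < n.+1) f (n - k)%N k.

Lemma eq_convsum n f g : f =2 g -> convsum n f = convsum n g.
Proof. by move=> fg; apply: eq_bigr => k _; apply: fg. Qed.

Lemma convsum_swap n f : convsum n f = convsum n (fun i j => f j i).
Proof.
rewrite /convsum big_nat_rev; apply: eq_big_nat => k /andP[_ lt_k_n].
by rewrite add0n subSS subKn.
Qed.

Lemma convsum_eq0 n f : (forall i j, (i + j)%N = n -> f i j = 0) -> convsum n f = 0.
Proof.
move=> f0; rewrite /convsum big_nat_cond big1 // => k /andP[/andP[_ lt_k_n] _].
by apply: f0; lia.
Qed.

Lemma convsum_geomS n al be f g :
  convsum n.+1 (fun i j => al ^+ i * be ^+ j *
      ((if i is i'.+1 then f i' j else 0) + (if j is j'.+1 then g i j' else 0))) =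
  al * convsum n (fun i j => al ^+ i * be ^+ j * f i j)
  + be * convsum n (fun i j => al ^+ i * be ^+ j * g i j).
Proof.
rewrite /convsum (eq_bigr _ (fun k _ => mulrDr _ _ _)) big_split /=.
rewrite [X in X + _]big_nat_recr //= [X in _ + X]big_nat_recl //= subnn.
rewrite !mulr0 addr0 add0r !mulr_sumr.
congr (_ + _); apply: eq_big_nat => k /andP[_ lt_k_n].
- by rewrite subSn // exprS !mulrA.
- by rewrite subSS exprS mulrCA !mulrA.
Qed.

End Convolution.

Section GeometricWeights.
Variable F : fieldType.
Implicit Types (x : F) (f : nat -> nat -> F).

Lemma sum_exprz_convsum x n f : x != 0 ->
  \sum_(0 <= k < n.+1) x ^ ((2 * k)%:Z - n%:Z) * f (n - k)%N k =
  convsum n (fun i j => x^-1 ^+ i * x ^+ j * f i j).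
Proof.
move=> x_neq0; apply: eq_big_nat => k /andP[_ lt_k_n].
have -> : (2 * k)%:Z - n%:Z = - (n - k)%N%:Z + k%:Z by lia.
by rewrite expfzDr // -exprz_inv.
Qed.

Lemma sum_exprz_convsum_rev x n f : x != 0 ->
  \sum_(0 <= k < n.+1) x ^ (n%:Z - (2 * k)%:Z) * f (n - k)%N k =
  convsum n (fun i j => x ^+ i * x^-1 ^+ j * f i j).
Proof.
move=> x_neq0; have := sum_exprz_convsum n f (invr_neq0 x_neq0).
rewrite invrK => <-.
by apply: eq_bigr => k _; rewrite exprz_inv opprB.
Qed.

End GeometricWeights.

Section AlternatingSums.
Variables (F : fieldType) (q : F).
Hypothesis q_neq0 : q != 0.
Local Notation shc := (shcoef q).
Local Notation P n := (vpow (xyyx F) n).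
Implicit Types (al be : F) (a b c d : bool) (w : word).

(* i and j are the half-lengths of the even and the odd word; the weights of the
   theorem, q^{2k-n} and q^{n-2k} with j = k, are al^i be^j for (al, be) = (q^-1, q)
   and (q, q^-1). *)
Definition eo_sum al be b a n w :=
  convsum n (fun i j => al ^+ i * be ^+ j * shc (evenw b i) (oddw a j) w).
Definition oe_sum al be b a n w :=
  convsum n (fun i j => al ^+ i * be ^+ j * shc (oddw a j) (evenw b i) w).

Lemma eo_sum_swap al be b a n w :
  eo_sum al be b a n w =
  convsum n (fun i j => al ^+ j * be ^+ i * shc (evenw b j) (oddw a i) w).
Proof. exact: convsum_swap. Qed.

Lemma oe_sum_swap al be b a n w :
  oe_sum al be b a n w =
  convsum n (fun i j => al ^+ j * be ^+ i * shc (oddw a i) (evenw b j) w).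
Proof. exact: convsum_swap. Qed.

Lemma eo_sum_short al be b a n w : (size w < 2)%N -> eo_sum al be b a n.+1 w = 0.
Proof.
move=> short_w; apply: convsum_eq0 => i j sum_ij.
by rewrite shcoef_size ?mulr0 // size_evenw size_oddw; lia.
Qed.

Lemma oe_sum_short al be b a n w : (size w < 2)%N -> oe_sum al be b a n.+1 w = 0.
Proof.
move=> short_w; apply: convsum_eq0 => i j sum_ij.
by rewrite shcoef_size ?mulr0 // size_evenw size_oddw; lia.
Qed.

Local Ltac convsum_lincomb :=
  rewrite /convsum ?mulrDr ?mulr_sumr -?big_split /=; apply: eq_bigr => k _; field.

Lemma eo_sum_sameS a n c d w :
  eo_sum q^-1 q a a n.+1 (c :: d :: w) =
    (~~ a == c)%:R * (a == d)%:R * (q^-1 * eo_sum q^-1 q a a n w + q * oe_sum q q^-1 a a n w)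
  + (a == c)%:R * (~~ a == d)%:R * (q^-1 * oe_sum q q^-1 a a n w + q * eo_sum q^-1 q a a n w).
Proof.
rewrite oe_sum_swap /eo_sum.
under eq_convsum => i j do rewrite shcoef_evenw_oddw.
by rewrite convsum_geomS; convsum_lincomb.
Qed.

Lemma oe_sum_sameS a n c d w :
  oe_sum q q^-1 a a n.+1 (c :: d :: w) =
    (~~ a == c)%:R * (a == d)%:R * (q^-1 * eo_sum q^-1 q a a n w + q * oe_sum q q^-1 a a n w)
  + (a == c)%:R * (~~ a == d)%:R * (q^-1 * oe_sum q q^-1 a a n w + q * eo_sum q^-1 q a a n w).
Proof.
rewrite eo_sum_swap /oe_sum.
under eq_convsum => i j do rewrite (shcoef_oddw_evenw q_neq0).
by rewrite convsum_geomS; convsum_lincomb.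
Qed.

Lemma eo_sum_mixedS a n c d w :
  eo_sum q q^-1 (~~ a) a n.+1 (c :: d :: w) =
    (a == c)%:R * (~~ a == d)%:R * (q + q^-1) * eo_sum q q^-1 (~~ a) a n w
  + (a == c)%:R * (a == d)%:R * (q + q^-1) * oe_sum q^-1 q a (~~ a) n w.
Proof.
rewrite oe_sum_swap /eo_sum.
under eq_convsum => i j do rewrite (shcoef_evenwN_oddw q_neq0).
by rewrite convsum_geomS; convsum_lincomb.
Qed.

Lemma oe_sum_mixedS a n c d w :
  oe_sum q^-1 q (~~ a) a n.+1 (c :: d :: w) =
    (a == c)%:R * (~~ a == d)%:R * (q + q^-1) * oe_sum q^-1 q (~~ a) a n w
  + (a == c)%:R * (a == d)%:R * (q + q^-1) * eo_sum q q^-1 a (~~ a) n w.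
Proof.
rewrite eo_sum_swap /oe_sum.
under eq_convsum => i j do rewrite (shcoef_oddw_evenwN q_neq0).
by rewrite convsum_geomS; convsum_lincomb.
Qed.

Lemma eo_oe_sum_same a n w :
  eo_sum q^-1 q a a n w = (q + q^-1) ^+ n * coef (vcat (P n) (vword F [:: a])) w /\
  oe_sum q q^-1 a a n w = (q + q^-1) ^+ n * coef (vcat (P n) (vword F [:: a])) w.
Proof.
elim: n w => [|n IH] w.
  rewrite /eo_sum /oe_sum /convsum !big_nat1 /vcat /= mul1r coef_vword.
  by rewrite shcoef_nil_l shcoef_nil_r !mul1r.
rewrite [P n.+1]/= vcatA.
case: w => [|c [|d w]].
- by rewrite eo_sum_short ?oe_sum_short ?coef_xyyx_vcat_short ?mulr0.
- by rewrite eo_sum_short ?oe_sum_short ?coef_xyyx_vcat_short ?mulr0.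
rewrite eo_sum_sameS oe_sum_sameS coef_xyyx_vcat; case: (IH w) => -> ->.
by rewrite exprS; split; case: (a); case: c; case: d => /=; ring.
Qed.

Lemma eo_oe_sum_mixed n : forall a w,
  eo_sum q q^-1 (~~ a) a n w = (q + q^-1) ^+ n * coef (vcat (vword F [:: a]) (P n)) w /\
  oe_sum q^-1 q (~~ a) a n w = (q + q^-1) ^+ n * coef (vcat (vword F [:: a]) (P n)) w.
Proof.
elim: n => [|n IH] a w.
  rewrite /eo_sum /oe_sum /convsum !big_nat1 /vcat /= mul1r coef_vword.
  by rewrite shcoef_nil_l shcoef_nil_r !mul1r.
case: w => [|c [|d w]].
- by rewrite eo_sum_short ?oe_sum_short ?coef_letter_vcat_nil ?mulr0.
- by rewrite eo_sum_short ?oe_sum_short ?coef_letter_vcat /= ?coef_xyyx_vcat_short ?mulr0.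
rewrite eo_sum_mixedS oe_sum_mixedS coef_letter_vcat [P n.+1]/=.
have [-> ->] := IH a w; have := IH (~~ a) w; rewrite negbK => -[-> ->].
case: w => [|e w]; first by rewrite coef_xyyx_vcat_short ?coef_letter_vcat_nil ?mulr0 ?addr0.
rewrite coef_xyyx_vcat !coef_letter_vcat exprS.
by split; case: (a); case: c; case: d; case: e => /=; ring.
Qed.

End AlternatingSums.

Section ShuffleSums.
Variables (F : fieldType) (q : F).
Hypothesis q_neq0 : q != 0.
Local Notation P n := (vpow (xyyx F) n).

Lemma coef_vsum_star n (e : nat -> int) (u v : nat -> word) w :
  coef (vsum n (fun k => vscale (q ^ e k) (star q (vword F (u k)) (vword F (v k))))) w =
  \sum_(0 <= k < n.+1) q ^ e k * shcoef q (u k) (v k) w.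
Proof. by rewrite coef_vsum; apply: eq_bigr => k _; rewrite coef_vscale coef_star. Qed.

Lemma vsum_evenw_oddw a n :
  veq (vsum n (fun k => vscale (q ^ ((2 * k)%:Z - n%:Z))
                          (star q (vword F (evenw a (n - k))) (vword F (oddw a k)))))
      (vscale ((q + q^-1) ^+ n) (vcat (P n) (vword F [:: a]))).
Proof.
move=> w; rewrite coef_vsum_star coef_vscale.
rewrite (sum_exprz_convsum _ (fun i j => shcoef q (evenw a i) (oddw a j) w)) //.
exact: (eo_oe_sum_same q_neq0 a n w).1.
Qed.

Lemma vsum_oddw_evenw a n :
  veq (vsum n (fun k => vscale (q ^ (n%:Z - (2 * k)%:Z))
                          (star q (vword F (oddw a k)) (vword F (evenw a (n - k))))))
      (vscale ((q + q^-1) ^+ n) (vcat (P n) (vword F [:: a]))).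
Proof.
move=> w; rewrite coef_vsum_star coef_vscale.
rewrite (sum_exprz_convsum_rev _ (fun i j => shcoef q (oddw a j) (evenw a i) w)) //.
exact: (eo_oe_sum_same q_neq0 a n w).2.
Qed.

Lemma vsum_evenwN_oddw a n :
  veq (vsum n (fun k => vscale (q ^ (n%:Z - (2 * k)%:Z))
                          (star q (vword F (evenw (~~ a) (n - k))) (vword F (oddw a k)))))
      (vscale ((q + q^-1) ^+ n) (vcat (vword F [:: a]) (P n))).
Proof.
move=> w; rewrite coef_vsum_star coef_vscale.
rewrite (sum_exprz_convsum_rev _ (fun i j => shcoef q (evenw (~~ a) i) (oddw a j) w)) //.
exact: (eo_oe_sum_mixed q_neq0 n a w).1.
Qed.

Lemma vsum_oddw_evenwN a n :
  veq (vsum n (fun k => vscale (q ^ ((2 * k)%:Z - n%:Z))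
                          (star q (vword F (oddw a k)) (vword F (evenw (~~ a) (n - k))))))
      (vscale ((q + q^-1) ^+ n) (vcat (vword F [:: a]) (P n))).
Proof.
move=> w; rewrite coef_vsum_star coef_vscale.
rewrite (sum_exprz_convsum _ (fun i j => shcoef q (oddw a j) (evenw (~~ a) i) w)) //.
exact: (eo_oe_sum_mixed q_neq0 n a w).2.
Qed.

End ShuffleSums.

Lemma qint2 (F : fieldType) (q : F) : q != 0 -> q ^+ 2 != 1 -> qint q 2 = q + q^-1.
Proof.
move=> q_neq0 q2_neq1; rewrite /qint -exprnN -exprnP; field.
by rewrite q_neq0 subr_eq0 -expr2.
Qed.

Theorem proposition12p5 (F : fieldType) (q : F)
  (hq0 : q != 0) (hq : forall m : nat, (0 < m)%N -> q ^+ m != 1) (n : nat) :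
  let e1 k := q ^ ((2 * k)%:Z - n%:Z) in   (* q^{2k-n} *)
  let e2 k := q ^ (n%:Z - (2 * k)%:Z) in   (* q^{n-2k} *)
  let c := qint q 2 ^+ n in                (* [2]_q^n *)
  let P := vpow (xyyx F) n in              (* (xy+yx)^n *)
  (* first line *)
  veq (vsum n (fun k => vscale (e1 k) (star q (vword F (Gw (n - k))) (vword F (Wneg k)))))
      (vsum n (fun k => vscale (e2 k) (star q (vword F (Wneg k)) (vword F (Gw (n - k)))))) /\
  veq (vsum n (fun k => vscale (e2 k) (star q (vword F (Wneg k)) (vword F (Gw (n - k))))))
      (vscale c (vcat P (vword F [:: lx]))) /\
  (* second line *)
  veq (vsum n (fun k => vscale (e2 k) (star q (vword F (Gw (n - k))) (vword F (Wpos k)))))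
      (vsum n (fun k => vscale (e1 k) (star q (vword F (Wpos k)) (vword F (Gw (n - k)))))) /\
  veq (vsum n (fun k => vscale (e1 k) (star q (vword F (Wpos k)) (vword F (Gw (n - k))))))
      (vscale c (vcat (vword F [:: ly]) P)) /\
  (* third line *)
  veq (vsum n (fun k => vscale (e2 k) (star q (vword F (Gtw (n - k))) (vword F (Wneg k)))))
      (vsum n (fun k => vscale (e1 k) (star q (vword F (Wneg k)) (vword F (Gtw (n - k)))))) /\
  veq (vsum n (fun k => vscale (e1 k) (star q (vword F (Wneg k)) (vword F (Gtw (n - k))))))
      (vscale c (vcat (vword F [:: lx]) P)) /\
  (* fourth line *)
  veq (vsum n (fun k => vscale (e1 k) (star q (vword F (Gtw (n - k))) (vword F (Wpos k)))))
      (vsum n (fun k => vscale (e2 k) (star q (vword F (Wpos k)) (vword F (Gtw (n - k)))))) /\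
  veq (vsum n (fun k => vscale (e2 k) (star q (vword F (Wpos k)) (vword F (Gtw (n - k))))))
      (vscale c (vcat P (vword F [:: ly]))).
Proof.
move=> e1 e2 c P; rewrite {}/c qint2 ?hq //.
have EO := vsum_evenw_oddw hq0; have OE := vsum_oddw_evenw hq0.
have EON := vsum_evenwN_oddw hq0; have OEN := vsum_oddw_evenwN hq0.
do !split; move=> w.
- by rewrite (EO lx n w) (OE lx n w).
- exact: (OE lx n w).
- by rewrite (EON ly n w) (OEN ly n w).
- exact: (OEN ly n w).
- by rewrite (EON lx n w) (OEN lx n w).
- exact: (OEN lx n w).
- by rewrite (EO ly n w) (OE ly n w).
- exact: (OE ly n w).
Qed.
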